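(* Let $f$ be a convergent power series in $\mathbf z=(z_1,\dots,z_n)$ with $f(\mathbf 0)=0$ and let $f_i=\partial f/\partial z_i$. (1) If $P\sim_J Q$ then $P\sim Q$. Conversely, if $P\sim Q$ and the face function $f_P$ contains all $n$ variables $z_1,\dots,z_n$, then $P\sim_J Q$. (2) A strictly positive weight vector $P$ is a vertex of $\Gamma^*(f)$ if and only if $\dim\Delta(P,f)=n-1$, and it is a vertex of $\Gamma_J^*(f)$ if and only if $\dim\big(\Delta(P,f)+\sum_{i=1}^n\Delta(P,f_i)\big)=n-1$, where the sum is the Minkowski sum.
   Context: For a convergent power series $g=\sum c_\nu\mathbf z^\nu$, the Newton diagram $\Gamma_+(g)$ is the convex hull of $\bigcup_{c_\nu\ne0}(\nu+\mathbb R_{\ge0}^n)$. For a weight vector $P=(p_1,\dots,p_n)\in\mathbb R_{\ge0}^n$, $d(P,g)=\min\{\sum_ip_i\nu_i:\nu\in\Gamma_+(g)\}$, $\Delta(P,g)$ is the face of $\Gamma_+(g)$ where this minimum is attained, and $g_P=\sum_{\nu\in\Delta(P,g)}c_\nu\mathbf z^\nu$. $P$ is strictly positive if all $p_i>0$. Two weight vectors are equivalent, $P\sim Q$, if $\Delta(P,f)=\Delta(Q,f)$; the equivalence classes give a rational polyhedral cone subdivision $\Gamma^*(f)$ of $\mathbb R_{\ge0}^n$ (the dual Newton diagram). They are Jacobian equivalent, $P\sim_JQ$, if $\Delta(P,f)=\Delta(Q,f)$ and $\Delta(P,f_i)=\Delta(Q,f_i)$ for all $i=1,\dots,n$; the classes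 give a finer cone subdivision $\Gamma_J^*(f)$. A vertex of a subdivision is a non-zero weight vector spanning a one-dimensional cone of it. *)

From HB Require Import structures.
From mathcomp Require Import all_boot all_order all_algebra.
From mathcomp Require Import boolp reals.
Set Implicit Arguments. Unset Strict Implicit. Unset Printing Implicit Defensive.
Import Order.TTheory GRing.Theory Num.Theory.
Local Open Scope ring_scope.

Section Defs.
Variable R : realType.
Variable C : numClosedFieldType.
Variable n : nat.

Definition expo := {ffun 'I_n -> nat}.
Definition pser := expo -> C.        (* g = sum_nu g(nu) z^nu *)
Definition vset := 'rV[R]_n -> Prop.

Definition tdeg (nu : expo) : nat := \sum_(i < n) nu i.

(* convergence of a power series near 0 (Cauchy/Abel estimate):
   there is r > 0 with |c_nu| r^|nu| bounded. *)
Definition convergent (g : pser) : Prop :=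
  exists r : C, 0 < r /\ exists M : C, forall nu, `|g nu| * r ^+ tdeg nu <= M.

Definition zero_expo : expo := [ffun _ => 0%N].

Definition incr (nu : expo) (i : 'I_n) : expo := [ffun j => (nu j + (j == i))%N].

Definition pderiv (g : pser) (i : 'I_n) : pser :=
  fun nu => (nu i).+1%:R * g (incr nu i).

Definition pt (nu : expo) : 'rV[R]_n := \row_j (nu j)%:R.

Definition wdot (P x : 'rV[R]_n) : R := \sum_(j < n) P 0 j * x 0 j.

Definition conv_hull (A : vset) : vset := fun x =>
  exists m (p : 'I_m -> 'rV[R]_n) (w : 'I_m -> R),
    (forall k, A (p k)) /\ (forall k, 0 <= w k) /\ \sum_(k < m) w k = 1 /\
    x = \sum_(k < m) w k *: p k.

Definition newton (g : pser) : vset :=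
  conv_hull (fun x => exists nu, g nu != 0 /\ forall j, (pt nu) 0 j <= x 0 j).

Definition Delta (P : 'rV[R]_n) (g : pser) : vset := fun x =>
  newton g x /\ forall y, newton g y -> wdot P x <= wdot P y.

Definition face_fun (P : 'rV[R]_n) (g : pser) : pser :=
  fun nu => if `[< Delta P g (pt nu) >] then g nu else 0.

Definition contains_var (g : pser) (i : 'I_n) : Prop :=
  exists nu, g nu != 0 /\ (0 < nu i)%N.

Definition weight (P : 'rV[R]_n) : Prop := forall j, 0 <= P 0 j.
Definition strictly_pos (P : 'rV[R]_n) : Prop := forall j, 0 < P 0 j.

Definition wequiv (f : pser) (P Q : 'rV[R]_n) : Prop := Delta P f = Delta Q f.

Definition jequiv (f : pser) (P Q : 'rV[R]_n) : Prop :=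
  Delta P f = Delta Q f /\ forall i, Delta P (pderiv f i) = Delta Q (pderiv f i).

(* P is a vertex of the cone subdivision given by the classes of the
   equivalence relation eqv on R_{>=0}^n: P <> 0 and the cone of the
   subdivision containing P (its class) is the ray spanned by P. *)
Definition is_vertex (eqv : 'rV[R]_n -> 'rV[R]_n -> Prop) (P : 'rV[R]_n) : Prop :=
  P != 0 /\
  (fun Q => weight Q /\ eqv P Q) = (fun Q => exists t : R, 0 < t /\ Q = t *: P).

Definition msum (A B : vset) : vset := fun x =>
  exists a b, A a /\ B b /\ x = a + b.

Definition jac_face_sum (P : 'rV[R]_n) (f : pser) : vset :=
  foldr (fun i S => msum S (Delta P (pderiv f i))) (Delta P f) (enum 'I_n).

Definition aff_indep_in (S : vset) (k : nat) : Prop :=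
  exists p : 'I_k.+1 -> 'rV[R]_n, (forall l, S (p l)) /\
    row_free (\matrix_(l < k) (p (lift ord0 l) - p ord0)).

Definition has_dim (S : vset) (k : nat) : Prop :=
  aff_indep_in S k /\ ~ aff_indep_in S k.+1.

End Defs.

From HB Require Import structures.
From mathcomp Require Import all_boot all_order all_algebra.
From mathcomp Require Import boolp reals ring lra.
Import Order.TTheory GRing.Theory Num.Theory.
Local Open Scope ring_scope.
Set Implicit Arguments. Unset Strict Implicit. Unset Printing Implicit Defensive.

(* If z_i occurs in the face function f_P, then the face of f_i is
   Delta(P, f_i) = { x in Gamma_+(f_i) | x + e_i in Delta(P, f) }, so it is
   determined by Delta(P, f); this gives part (1).

   For part (2), both subdivisions are cut out by the faces of a finite family
   of series (f alone, or f and all f_i), and every weight Q in the class of a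
   strictly positive P is constant on the Minkowski sum S of these faces.
   Conversely, the values of P on exponents form a discrete set, so for every v
   constant on all the faces, P + e v is still in the class of P when e > 0 is
   small. Hence the class of P is the open ray through P exactly when the only
   linear forms constant on S are the multiples of P, i.e. when S spans an
   affine space of dimension n - 1. If S is empty, some member of the family
   vanishes: either f = 0, and then 0 is in the class of P, or some f_i = 0, and
   then all faces lie in the hyperplane x_i = 0, on which e_i is constant. *)

Lemma seq_argmin (R : realType) (T : choiceType) (F : T -> R) (s : seq T) t0 :
  t0 \in s -> exists2 t, t \in s & forall u, u \in s -> F t <= F u.
Proof.
move=> t0s; have [t _ Ht] := arg_minP (F \o val) (isT : predT (SeqSub t0s)).
by exists (val t) => [|u us]; [exact: valP | exact: (Ht (SeqSub us))].
Qed.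

Lemma mem_In (T : eqType) (x : T) (s : seq T) : x \in s -> List.In x s.
Proof. by elim: s => //= y s IH; rewrite inE => /predU1P [->|/IH]; [left | right]. Qed.

Section WeightedDot.
Variables (R : realType) (n : nat).
Implicit Types (P Q u x y : 'rV[R]_n).

Lemma wdot_mx P x : wdot P x = (P *m x^T) 0 0.
Proof. by rewrite /wdot !mxE; apply: eq_bigr => j _; rewrite !mxE. Qed.

Lemma wdotC P x : wdot P x = wdot x P.
Proof. by apply: eq_bigr => j _; rewrite mulrC. Qed.

Lemma wdotDr P x y : wdot P (x + y) = wdot P x + wdot P y.
Proof. by rewrite !wdot_mx linearD mulmxDr mxE. Qed.

Lemma wdotZr P a x : wdot P (a *: x) = a * wdot P x.
Proof. by rewrite !wdot_mx linearZ -scalemxAr mxE. Qed.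

Lemma wdotBr P x y : wdot P (x - y) = wdot P x - wdot P y.
Proof. by rewrite wdotDr -scaleN1r wdotZr mulN1r. Qed.

Lemma wdot0r P : wdot P 0 = 0.
Proof. by rewrite wdot_mx trmx0 mulmx0 mxE. Qed.

Lemma wdot0l x : wdot 0 x = 0.
Proof. by rewrite wdot_mx mul0mx mxE. Qed.

Lemma wdotDl P Q x : wdot (P + Q) x = wdot P x + wdot Q x.
Proof. by rewrite !(wdotC _ x) wdotDr. Qed.

Lemma wdotZl a P x : wdot (a *: P) x = a * wdot P x.
Proof. by rewrite !(wdotC _ x) wdotZr. Qed.

Lemma wdot_deltar P i : wdot P (delta_mx 0 i) = P 0 i.
Proof. by rewrite wdot_mx trmx_delta -colE mxE. Qed.

Lemma wdot_deltal i x : wdot (delta_mx 0 i) x = x 0 i.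
Proof. by rewrite wdotC wdot_deltar. Qed.

Lemma wdot_sumr P m (w : 'I_m -> R) (p : 'I_m -> 'rV[R]_n) :
  wdot P (\sum_(k < m) w k *: p k) = \sum_(k < m) w k * wdot P (p k).
Proof.
rewrite (big_morph (wdot P) (wdotDr P) (wdot0r P)).
by apply: eq_bigr => k _; rewrite wdotZr.
Qed.

Lemma wdot_ge0 P x : weight P -> (forall j, 0 <= x 0 j) -> 0 <= wdot P x.
Proof. by move=> HP Hx; apply: sumr_ge0 => j _; apply: mulr_ge0. Qed.

Lemma ler_wdot P x y : weight P -> (forall j, x 0 j <= y 0 j) ->
  wdot P x <= wdot P y.
Proof. by move=> HP Hxy; apply: ler_sum => j _; apply: ler_wpM2l. Qed.

Lemma wdot_ge_term P x j : weight P -> (forall j, 0 <= x 0 j) ->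
  P 0 j * x 0 j <= wdot P x.
Proof.
move=> HP Hx; rewrite /wdot (bigD1 j) //= lerDl.
by apply: sumr_ge0 => k _; apply: mulr_ge0.
Qed.

Lemma wdot_norm_le P u y θ : (forall j, `|u 0 j| <= θ * P 0 j) ->
  (forall j, 0 <= y 0 j) -> `|wdot u y| <= θ * wdot P y.
Proof.
move=> Hu Hy; apply: le_trans (ler_norm_sum _ _ _) _; rewrite mulr_sumr.
apply: ler_sum => j _; rewrite normrM (ger0_norm (Hy j)) mulrA.
exact: ler_wpM2r.
Qed.

Definition wconst P (S : vset R n) := forall x y, S x -> S y -> wdot P x = wdot P y.

Lemma strictly_pos_weight P : strictly_pos P -> weight P.
Proof. by move=> HP j; apply: ltW. Qed.

End WeightedDot.

Section NewtonDiagram.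
Variables (R : realType) (C : numClosedFieldType) (n : nat).
Local Notation vec := 'rV[R]_n.
Implicit Types (P Q x r : vec) (A B : vset R n) (g : pser C n).

Lemma conv_hull_ge A Q a x :
  conv_hull A x -> (forall p, A p -> a <= wdot Q p) -> a <= wdot Q x.
Proof.
move=> [m [p [w [Ap [w0 [w1 ->]]]]]] HA.
rewrite wdot_sumr -[a]mul1r -w1 mulr_suml.
by apply: ler_sum => k _; apply: ler_wpM2l => //; apply: HA.
Qed.

Lemma conv_hull_gt A Q Q' a b x :
  conv_hull A x ->
  (forall p, A p -> a <= wdot Q p /\ (b < wdot Q' p -> a < wdot Q p)) ->
  b < wdot Q' x -> a < wdot Q x.
Proof.
move=> [m [p [w [Ap [w0 [w1 ->]]]]]] HA; rewrite !wdot_sumr => hb.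
have [k /andP [bk wk] | none] := pickP (fun k => (b < wdot Q' (p k)) && (0 < w k)).
  rewrite -[a]mul1r -w1 mulr_suml (bigD1 k) //= [X in _ < X](bigD1 k) //=.
  apply: ltr_leD; first by rewrite ltr_pM2l //; apply: (HA _ (Ap k)).2.
  by apply: ler_sum => j _; apply: ler_wpM2l => //; apply: (HA _ (Ap j)).1.
exfalso; move: hb; apply/negP; rewrite -leNgt -[b]mul1r -w1 mulr_suml.
apply: ler_sum => k _; case: (lerP (wdot Q' (p k)) b) => [|bk].
  exact: ler_wpM2l.
have wk0 : w k = 0 by apply/eqP; rewrite eq_le w0 andbT leNgt -(andTb (0 < w k)) -bk none.
by rewrite wk0 !mul0r.
Qed.

Lemma conv_hull_translate A B r x :
  conv_hull A x -> (forall p, A p -> B (p + r)) -> conv_hull B (x + r).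
Proof.
move=> [m [p [w [Ap [w0 [w1 ->]]]]]] HAB.
exists m, (fun k => p k + r), w; split=> [k|]; first exact: HAB.
do 2!split=> //.
under [RHS]eq_bigr => k _ do rewrite scalerDr.
by rewrite big_split /= -scaler_suml w1 scale1r.
Qed.

Definition supp_orthant g : vset R n := fun x =>
  exists nu, g nu != 0 /\ forall j, (pt R nu) 0 j <= x 0 j.

Lemma supp_orthant_newton g x : supp_orthant g x -> newton g x.
Proof.
move=> Hx; exists 1%N, (fun _ => x), (fun _ => 1); do 3!split=> //.
all: by rewrite big_ord1 ?scale1r.
Qed.

Lemma newton_pt g nu : g nu != 0 -> newton g (pt R nu).
Proof. by move=> gnu; apply: supp_orthant_newton; exists nu. Qed.

Lemma pt_ge0 (nu : expo n) j : 0 <= (pt R nu) 0 j.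
Proof. by rewrite mxE ler0n. Qed.

Lemma newton_translate g x r :
  newton g x -> (forall j, 0 <= r 0 j) -> newton g (x + r).
Proof.
move=> Hx Hr; apply: (conv_hull_translate Hx) => p [nu [gnu Hp]].
by exists nu; split=> // j; rewrite [X in _ <= X]mxE (le_trans (Hp j)) ?lerDl.
Qed.

Lemma newton_ge0 g x j : newton g x -> 0 <= x 0 j.
Proof.
move=> Hx; rewrite -wdot_deltal; apply: (conv_hull_ge Hx) => p [nu [_ Hp]].
by rewrite wdot_deltal (le_trans (pt_ge0 nu j) (Hp j)).
Qed.

Lemma newton_eq0 g x : (forall nu, g nu = 0) -> ~ newton g x.
Proof.
move=> g0 [[|m] [p [w [Ap [_ [w1 _]]]]]].
  by move: w1; rewrite big_ord0 => /esym/eqP; rewrite oner_eq0.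
by have [nu [/eqP]] := Ap ord0; rewrite g0.
Qed.

Lemma Delta_wconst P g : wconst P (Delta P g).
Proof. by move=> x y [nx Hx] [ny Hy]; apply/eqP; rewrite eq_le Hx // Hy. Qed.

Lemma Delta_scale t P g : 0 < t -> Delta (t *: P) g = Delta P g.
Proof.
move=> t0; rewrite predeqE => x; rewrite /Delta.
by split=> -[nx Hx]; split=> // y ny; move: (Hx y ny); rewrite !wdotZl ler_pM2l.
Qed.

End NewtonDiagram.

Section Discreteness.
Variables (R : realType) (C : numClosedFieldType) (n : nat) (P : 'rV[R]_n).
Hypothesis HP : strictly_pos P.

Lemma exponents_below D :
  exists L : seq (expo n), forall nu, wdot P (pt R nu) <= D -> nu \in L.
Proof.
pose K := \sum_j `|D| / P 0 j.
have K_ge0 j : 0 <= `|D| / P 0 j by rewrite divr_ge0 // ltW.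
have K_ge j : `|D| / P 0 j <= K.
  by rewrite /K (bigD1 j) //= lerDl; apply: sumr_ge0.
pose B := Num.bound K.
have KB : K < B%:R by apply/archi_boundP/sumr_ge0.
exists (map (fun t : {ffun 'I_n -> 'I_B.+1} => [ffun j => val (t j)] : expo n)
            (enum {ffun 'I_n -> 'I_B.+1})) => nu Hnu.
apply/mapP; exists [ffun j => inord (nu j)]; first by rewrite mem_enum.
apply/ffunP => j; rewrite !ffunE /= inordK // ltnS.
have nuD : (nu j)%:R * P 0 j <= `|D|.
  apply: le_trans (ler_norm D); apply: le_trans Hnu; rewrite mulrC.
  by have := wdot_ge_term j (strictly_pos_weight HP) (pt_ge0 R nu); rewrite mxE.
have : (nu j)%:R < B%:R :> R.
  by apply: le_lt_trans KB; apply: le_trans (K_ge j); rewrite ler_pdivlMr.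
by rewrite ltr_nat => /ltnW.
Qed.

Lemma wdot_pt_gap d : exists2 δ, 0 < δ &
  forall nu, d < wdot P (pt R nu) -> d + δ <= wdot P (pt R nu).
Proof.
have [L HL] := exponents_below (d + 1).
pose F nu := wdot P (pt R nu) - d.
exists (\big[Order.min/1]_(nu <- L | 0 < F nu) F nu) => [|nu Hnu].
  by apply: lt_bigmin.
rewrite addrC -lerBrDr.
have [/HL nuL | Hnu1] := lerP (wdot P (pt R nu)) (d + 1).
  by apply: ge_bigmin_seq; rewrite // subr_gt0.
by apply: le_trans (bigmin_le_id _ _ _ _) _; rewrite lerBrDr ltW // addrC.
Qed.

Lemma Delta_nonempty (g : pser C n) nu0 : g nu0 != 0 -> exists x, Delta P g x.
Proof.
move=> gnu0; have [L HL] := exponents_below (wdot P (pt R nu0)).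
have nu0L : nu0 \in [seq nu <- L | g nu != 0] by rewrite mem_filter gnu0 HL.
have [nu1] := seq_argmin (fun nu => wdot P (pt R nu)) nu0L.
rewrite mem_filter => /andP [gnu1 _] Hmin.
exists (pt R nu1); split; first exact: newton_pt.
move=> y ny; apply: (conv_hull_ge ny) => p [nu [gnu Hp]].
apply: le_trans (ler_wdot (strictly_pos_weight HP) Hp).
have [/HL nuL | /ltW] := lerP (wdot P (pt R nu)) (wdot P (pt R nu0)).
  by apply: Hmin; rewrite mem_filter gnu.
by apply: le_trans; apply: Hmin.
Qed.

Lemma Delta_empty_eq0 (g : pser C n) :
  ~ (exists x, Delta P g x) -> forall nu, g nu = 0.
Proof. by move=> noD nu; apply: contra_notP noD => /eqP; apply: Delta_nonempty. Qed.

End Discreteness.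

Section Perturbation.
Variables (R : realType) (C : numClosedFieldType) (n : nat).
Variables (P u x0 : 'rV[R]_n) (g : pser C n) (θ δ : R).
Hypotheses (HP : strictly_pos P) (Hx0 : Delta P g x0) (Hu : wconst u (Delta P g)).
Hypotheses (Hgap : forall nu, wdot P x0 < wdot P (pt R nu) ->
  wdot P x0 + δ <= wdot P (pt R nu)).
Hypotheses (Huθ : forall j, `|u 0 j| <= θ * P 0 j) (θ_lt1 : θ < 1)
  (θ_small : θ * (2 * wdot P x0 + δ) < δ).

Let Q := P + u.
Implicit Types (p y : 'rV[R]_n).

Lemma wdot_perturb_bounds y : (forall j, 0 <= y 0 j) ->
  wdot P y - θ * wdot P y <= wdot Q y /\ wdot Q y <= wdot P y + θ * wdot P y.
Proof.
move=> Hy; have := wdot_norm_le Huθ Hy; rewrite ler_norml /Q wdotDl.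
by case/andP; split; lra.
Qed.

Lemma perturb_supp_orthant p : supp_orthant g p ->
  wdot Q x0 <= wdot Q p /\ (wdot P x0 < wdot P p -> wdot Q x0 < wdot Q p).
Proof.
move=> [nu [gnu Hp]].
have [r r_ge0 ->] : exists2 r : 'rV[R]_n, (forall j, 0 <= r 0 j) & p = pt R nu + r.
  exists (p - pt R nu); last by rewrite addrC subrK.
  by move=> j; move: (Hp j); rewrite !mxE subr_ge0.
rewrite !wdotDr; have [Qr _] := wdot_perturb_bounds r_ge0.
have Pr0 : 0 <= wdot P r by apply: wdot_ge0 (strictly_pos_weight HP) r_ge0.
have θPr : θ * wdot P r <= wdot P r by rewrite -[X in _ <= X]mul1r ler_wpM2r // ltW.
have [Hnu | /Hgap Hnu] := lerP (wdot P (pt R nu)) (wdot P x0).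
  have Dnu : Delta P g (pt R nu).
    by split=> [|y ny]; [exact: newton_pt | exact: le_trans Hnu (Hx0.2 y ny)].
  have eQ : wdot Q (pt R nu) = wdot Q x0.
    by rewrite /Q !wdotDl (Delta_wconst Dnu Hx0) (Hu Dnu Hx0).
  rewrite eQ; split=> [|Hr]; first by lra.
  have Pr_gt0 : 0 < wdot P r by move: Hr; rewrite (Delta_wconst Dnu Hx0); lra.
  have : θ * wdot P r < 1 * wdot P r by rewrite ltr_pM2r.
  by rewrite mul1r; lra.
have [Qnu _] := wdot_perturb_bounds (pt_ge0 R nu).
have [_ Qx0] := wdot_perturb_bounds (fun j => newton_ge0 j Hx0.1).
have : θ * (wdot P (pt R nu) - wdot P x0 - δ) <= 1 * (wdot P (pt R nu) - wdot P x0 - δ).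
  by apply: ler_wpM2r; [lra | exact: ltW].
have := θ_small; by split=> [|_]; lra.
Qed.

Lemma perturb_newton y : newton g y ->
  wdot Q x0 <= wdot Q y /\ (wdot P x0 < wdot P y -> wdot Q x0 < wdot Q y).
Proof.
move=> ny; split; first by apply: (conv_hull_ge ny) => p /perturb_supp_orthant [].
exact: (conv_hull_gt ny perturb_supp_orthant).
Qed.

Lemma Delta_perturb_eq : Delta (P + u) g = Delta P g.
Proof.
rewrite predeqE => y; split=> [[ny Hy] | Dy].
  split=> // z nz; apply: le_trans (Hx0.2 z nz); rewrite leNgt; apply/negP.
  by move/(perturb_newton ny).2; rewrite ltNge Hy //; exact: Hx0.1.
split; first exact: Dy.1.
move=> z nz; have -> : wdot (P + u) y = wdot Q x0.
  by rewrite /Q !wdotDl (Delta_wconst Dy Hx0) (Hu Dy Hx0).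
exact: (perturb_newton nz).1.
Qed.

End Perturbation.

Section SmallPerturbation.
Variables (R : realType) (C : numClosedFieldType) (n : nat).
Implicit Types (P u v : 'rV[R]_n) (g : pser C n) (gs : seq (pser C n)).

Lemma Delta_perturb P g : strictly_pos P ->
  exists2 θ : R, 0 < θ & forall u, wconst u (Delta P g) ->
    (forall j, `|u 0 j| <= θ * P 0 j) -> Delta (P + u) g = Delta P g.
Proof.
move=> HP; have [[x0 Hx0] | noD] := pselect (exists x, Delta P g x); last first.
  exists 1 => // u _ _; have g0 := Delta_empty_eq0 HP noD.
  by rewrite predeqE => x; split=> -[/(newton_eq0 g0)].
have d_ge0 : 0 <= wdot P x0.
  by apply: wdot_ge0 (strictly_pos_weight HP) _ => j; apply: newton_ge0 Hx0.1.
have [δ δ_gt0 Hgap] := wdot_pt_gap HP (wdot P x0).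
have D_gt0 : 0 < 2 * wdot P x0 + δ by lra.
(* This θ gives (1 - θ) (d + δ) > (1 + θ) d for d = wdot P x0: after the
   perturbation, exponents off the face still weigh more than the face. *)
exists (δ / (2 * (2 * wdot P x0 + δ))) => [|u Hu Huθ].
  by rewrite divr_gt0 // mulr_gt0.
apply: (Delta_perturb_eq HP Hx0 Hu Hgap Huθ).
  by rewrite ltr_pdivrMr ?mulr_gt0 //; lra.
by rewrite mulrAC ltr_pdivrMr ?mulr_gt0 // ltr_pM2l //; lra.
Qed.

Definition same_faces gs P Q := forall g, List.In g gs -> Delta P g = Delta Q g.

Lemma Delta_perturb_seq P gs : strictly_pos P ->
  exists2 θ : R, 0 < θ & forall u, (forall g, List.In g gs -> wconst u (Delta P g)) ->
    (forall j, `|u 0 j| <= θ * P 0 j) -> same_faces gs P (P + u).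
Proof.
move=> HP; elim: gs => [|g gs [θ θ_gt0 IH]]; first by exists 1 => // u _ _ g [].
have [θg θg_gt0 Hg] := Delta_perturb g HP.
exists (Order.min θ θg) => [|u Hu Huθ]; first by rewrite lt_min θ_gt0.
have Huθ' θ' : Order.min θ θg <= θ' -> forall j, `|u 0 j| <= θ' * P 0 j.
  by move=> le_θ j; apply: le_trans (Huθ j) _; rewrite ler_wpM2r // ltW.
move=> h [<- | hh].
  rewrite Hg //; first by apply: Hu; left.
  by apply: Huθ'; rewrite ge_min lexx orbT.
by apply: IH hh => [h' h'gs|]; [apply: Hu; right | apply: Huθ'; rewrite ge_min lexx].
Qed.

Lemma small_multiple P v θ : strictly_pos P -> 0 < θ ->
  exists2 e : R, 0 < e & forall j, `|e * v 0 j| <= θ * P 0 j.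
Proof.
move=> HP θ_gt0; pose K := \sum_j `|v 0 j| / P 0 j.
have K_ge0 j : 0 <= `|v 0 j| / P 0 j by rewrite divr_ge0 // ltW.
have K1 : 0 < 1 + K by rewrite ltr_wpDr ?sumr_ge0.
exists (θ / (1 + K)) => [|j]; first exact: divr_gt0.
have vK : `|v 0 j| <= K * P 0 j.
  by rewrite -ler_pdivrMr // /K (bigD1 j) //= lerDl sumr_ge0.
rewrite normrM gtr0_norm ?divr_gt0 // mulrAC ler_pdivrMr //.
have := ler_wpM2l (ltW θ_gt0) vK; have := mulr_ge0 (ltW θ_gt0) (ltW (HP j)); lra.
Qed.

End SmallPerturbation.

Section AffineDimension.
Variables (R : realType) (n : nat).
Local Notation vec := 'rV[R]_n.
Implicit Types (P Q v x : vec) (S : vset R n).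

Definition aff_mx k (p : 'I_k.+1 -> vec) : 'M[R]_(k, n) :=
  \matrix_(l < k) (p (lift ord0 l) - p ord0).

Lemma wdot_span_eq0 v k (A : 'M[R]_(k, n)) x :
  v *m A^T = 0 -> (x <= A)%MS -> wdot v x = 0.
Proof.
by move=> vA /submxP [D ->]; rewrite wdot_mx trmx_mul mulmxA vA mul0mx mxE.
Qed.

Lemma wconst_aff_mx S Q k (p : 'I_k.+1 -> vec) :
  (forall l, S (p l)) -> wconst Q S -> Q *m (aff_mx p)^T = 0.
Proof.
move=> Sp HQ; apply/rowP => l; rewrite [RHS]mxE.
transitivity (wdot Q (p (lift ord0 l) - p ord0)).
  by rewrite /wdot !mxE; apply: eq_bigr => j _; rewrite !mxE.
by rewrite wdotBr (HQ _ _ (Sp _) (Sp ord0)) subrr.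
Qed.

Lemma aff_indep_le S k : aff_indep_in S k -> (k <= n)%N.
Proof. by case=> p [_ /eqP <-]; apply: rank_leq_col. Qed.

Lemma aff_indep0 S s : S s -> aff_indep_in S 0.
Proof.
by move=> Ss; exists (fun _ => s); split=> //; rewrite /row_free -leqn0 rank_leq_row.
Qed.

Lemma not_aff_indep_full S P : P != 0 -> wconst P S -> ~ aff_indep_in S n.
Proof.
move=> P0 HP [p [Sp Mf]]; move: P0; apply/negP; rewrite negbK.
have Mu : (aff_mx p)^T \in unitmx by rewrite unitmx_tr -row_free_unit.
by rewrite -(mulmxK Mu P) (wconst_aff_mx Sp HP) mul0mx.
Qed.

Lemma aff_indep_sub S P Q : (0 < n)%N -> aff_indep_in S n.-1 -> P != 0 ->
  wconst P S -> wconst Q S -> (Q <= P)%MS.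
Proof.
move=> n_gt0 [p [Sp Mf]] P0 HP HQ; pose K := kermx (aff_mx p)^T.
have PK : (P <= K)%MS by apply/sub_kermxP; apply: wconst_aff_mx Sp HP.
have QK : (Q <= K)%MS by apply/sub_kermxP; apply: wconst_aff_mx Sp HQ.
have rK : \rank K = 1%N.
  by rewrite mxrank_ker mxrank_tr (eqP Mf) -subn1 subKn.
have KP : (K <= P)%MS by rewrite -(mxrank_leqif_sup PK).2 rK rank_rV P0.
exact: submx_trans QK KP.
Qed.

Lemma aff_indep_ext S k (p : 'I_k.+1 -> vec) x :
  (forall l, S (p l)) -> row_free (aff_mx p) -> S x ->
  ~~ (x - p ord0 <= aff_mx p)%MS -> aff_indep_in S k.+1.
Proof.
move=> Sp Mf Sx Hx.
pose p' (j : 'I_k.+2) := if (j < k.+1)%N then p (inord j) else x.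
have p'0 : p' ord0 = p ord0 by rewrite /p' /=; congr p; apply: val_inj; rewrite /= inordK.
have x_sub : (x - p ord0 <= aff_mx p')%MS.
  have -> : x - p ord0 = row ord_max (aff_mx p').
    by rewrite rowK p'0 /p' lift0 ltnn.
  exact: row_sub.
have A_sub : (aff_mx p <= aff_mx p')%MS.
  apply/row_subP => i; have -> : row i (aff_mx p) = row (widen_ord (leqnSn k) i) (aff_mx p').
    rewrite !rowK p'0 /p' lift0 /= ltnS ltn_ord; congr (p _ - _).
    by apply: val_inj; rewrite /= inordK // ltnS ltn_ord.
  exact: row_sub.
exists p'; split=> [l|]; first by rewrite /p'; case: ifP.
have lt_A : (aff_mx p < (x - p ord0) + aff_mx p)%MS.
  by rewrite ltmxE addsmxSr /= addsmx_sub submx_refl andbT.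
have := rank_ltmx lt_A; rewrite (eqP Mf) => rk.
rewrite /row_free eqn_leq rank_leq_row (leq_trans rk) // mxrankS //.
by rewrite addsmx_sub x_sub A_sub.
Qed.

Lemma aff_indep_max S : (exists s, S s) -> exists k (p : 'I_k.+1 -> vec),
  [/\ forall l, S (p l), row_free (aff_mx p) &
      forall x, S x -> (x - p ord0 <= aff_mx p)%MS].
Proof.
move=> [s Ss].
have ex0 : exists k, `[< aff_indep_in S k >] by exists 0%N; apply/asboolP; apply: aff_indep0 Ss.
have ub k : `[< aff_indep_in S k >] -> (k <= n)%N by move/asboolP/aff_indep_le.
have [k /asboolP [p [Sp Mf]] kmax] := ex_maxnP ex0 ub.
exists k, p; split=> // x Sx; apply/negPn/negP => Hx.
by have := kmax _ (asboolT (aff_indep_ext Sp Mf Sx Hx)); rewrite ltnn.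
Qed.

Lemma wconst_off_line S P : (0 < n)%N -> P != 0 -> wconst P S -> (exists s, S s) ->
  ~ aff_indep_in S n.-1 -> exists v, ~~ (v <= P)%MS /\ wconst v S.
Proof.
move=> n_gt0 P0 HP S0 noA; have [k [p [Sp Mf Hspan]]] := aff_indep_max S0.
have k_lt : (k.+1 < n)%N.
  have := rank_leq_col (aff_mx p); rewrite (eqP Mf) leq_eqVlt => /orP [/eqP kn|].
    by subst k; case: (not_aff_indep_full P0 HP); exists p.
  rewrite leq_eqVlt => /orP [/eqP kn|] //.
  have kn' : k = n.-1 by rewrite -kn.
  by subst k; case: noA; exists p.
pose K := kermx (aff_mx p)^T.
have /row_subPn [i Ki] : ~~ (K <= P)%MS.
  apply: contraTN k_lt => /mxrankS; rewrite rank_rV P0 mxrank_ker mxrank_tr (eqP Mf).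
  by rewrite /= leq_subLR addn1 leqNgt.
exists (row i K); split=> // x y Sx Sy.
have Kp : row i K *m (aff_mx p)^T = 0 by apply/sub_kermxP; apply: row_sub.
have := wdot_span_eq0 Kp (Hspan x Sx); have := wdot_span_eq0 Kp (Hspan y Sy).
by rewrite !wdotBr; lra.
Qed.

End AffineDimension.

Section FaceSum.
Variables (R : realType) (C : numClosedFieldType) (n : nat).
Local Notation vec := 'rV[R]_n.
Implicit Types (P Q v x : vec) (A B : vset R n) (g : pser C n) (gs : seq (pser C n)).

Lemma msum_wconst v A B : wconst v A -> wconst v B -> wconst v (msum A B).
Proof.
move=> HA HB _ _ [a [b [Aa [Bb ->]]]] [a' [b' [Aa' [Bb' ->]]]].
by rewrite !wdotDr (HA a a') // (HB b b').
Qed.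

Lemma wconst_msuml v A B : (exists b, B b) -> wconst v (msum A B) -> wconst v A.
Proof.
move=> [b Bb] HAB a a' Aa Aa'; have := HAB (a + b) (a' + b).
by rewrite !wdotDr => /(_ _ _)/addIr; apply; [exists a, b | exists a', b].
Qed.

Lemma wconst_msumr v A B : (exists a, A a) -> wconst v (msum A B) -> wconst v B.
Proof.
move=> [a Aa] HAB b b' Bb Bb'; have := HAB (a + b) (a + b').
by rewrite !wdotDr => /(_ _ _)/addrI; apply; [exists a, b | exists a, b'].
Qed.

Definition face_sum P g0 gs : vset R n :=
  foldr (fun g S => msum S (Delta P g)) (Delta P g0) gs.

Lemma face_sum_wconst v P g0 gs :
  (forall g, List.In g (g0 :: gs) -> wconst v (Delta P g)) ->
  wconst v (face_sum P g0 gs).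
Proof.
elim: gs => [|g gs IH] Hv /=; first by apply: Hv; left.
apply: msum_wconst; last by apply: Hv; right; left.
by apply: IH => h [<-|hh]; apply: Hv; [left | right; right].
Qed.

Lemma face_sum_nonempty P g0 gs : (exists s, face_sum P g0 gs s) <->
  forall g, List.In g (g0 :: gs) -> exists x, Delta P g x.
Proof.
elim: gs => [|g gs IH] /=; first by split=> [[s Ds] h [<-|[]] | H]; [exists s | apply: H; left].
split=> [[_ [a [b [Sa [Db _]]]]] h [<-|[<-|hh]] | Hne].
- by apply: IH.1 => //; [exists a | left].
- by exists b.
- by apply: IH.1; [exists a | right].
have [a Sa] : exists a, face_sum P g0 gs a.
  by apply/IH => h [<-|hh]; apply: Hne; [left | right; right].
have [b Db] : exists b, Delta P g b by apply: Hne; right; left.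
by exists (a + b), a, b.
Qed.

Lemma wconst_face_sum v P g0 gs : (exists s, face_sum P g0 gs s) ->
  wconst v (face_sum P g0 gs) ->
  forall g, List.In g (g0 :: gs) -> wconst v (Delta P g).
Proof.
elim: gs => [|g gs IH] /= Sne Hv; first by move=> h [<-|[]].
have [_ [a [b [Sa [Db _]]]]] := Sne.
have HvS : wconst v (face_sum P g0 gs) by apply: wconst_msuml Hv; exists b.
move=> h [<-|[<-|hh]].
- by apply: IH; [exists a | | left].
- by apply: wconst_msumr Hv; exists a.
- by apply: IH; [exists a | | right].
Qed.

End FaceSum.

Section Vertex.
Variables (R : realType) (C : numClosedFieldType) (n : nat).
Local Notation vec := 'rV[R]_n.
Implicit Types (P Q v x : vec) (g : pser C n) (gs : seq (pser C n)).

Definition ray P : vset R n := fun Q => exists t, 0 < t /\ Q = t *: P.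

Lemma is_vertexE (eqv : vec -> vec -> Prop) P :
  is_vertex eqv P <-> P != 0 /\ forall Q, weight Q /\ eqv P Q <-> ray P Q.
Proof. by rewrite /is_vertex predeqE. Qed.

Lemma is_vertex_iff (e1 e2 : vec -> vec -> Prop) P :
  (forall Q, e1 P Q <-> e2 P Q) -> is_vertex e1 P <-> is_vertex e2 P.
Proof.
move=> e12; rewrite !is_vertexE.
by split=> -[P0 H]; split=> // Q; rewrite -H; split=> -[wQ eQ]; split=> //; apply/e12.
Qed.

Definition off_ray gs P := exists Q, [/\ weight Q, same_faces gs P Q & ~ ray P Q].

Hypothesis n_gt0 : (0 < n)%N.

Lemma strictly_pos_neq0 P : strictly_pos P -> P != 0.
Proof.
by move=> HP; apply/negP => /eqP P0; have := HP (Ordinal n_gt0); rewrite P0 mxE ltxx.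
Qed.

Lemma Delta0_neq P g x0 : strictly_pos P -> Delta P g x0 ->
  Delta 0 g <> Delta P g.
Proof.
move=> HP Dx0 eq0; pose j0 := Ordinal n_gt0.
have : Delta 0 g (x0 + delta_mx 0 j0).
  split=> [|y _]; last by rewrite !wdot0l.
  by apply: newton_translate Dx0.1 _ => j; rewrite mxE ler0n.
rewrite eq0 => D1; have := Delta_wconst D1 Dx0; rewrite wdotDr wdot_deltar.
by have := HP j0; lra.
Qed.

Lemma off_ray_zero gs P : strictly_pos P ->
  (forall g, List.In g gs -> forall nu, g nu = 0) -> off_ray gs P.
Proof.
move=> HP gs0; exists 0; split=> [j|g gg|[t [t_gt0 /rowP /(_ (Ordinal n_gt0))]]].
- by rewrite mxE.
- by rewrite predeqE => x; split=> -[/(newton_eq0 (gs0 g gg))].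
- by rewrite !mxE => /esym/eqP; rewrite mulf_eq0 !gt_eqF.
Qed.

Lemma off_ray_perturb gs P v : strictly_pos P -> ~~ (v <= P)%MS ->
  (forall g, List.In g gs -> wconst v (Delta P g)) -> off_ray gs P.
Proof.
move=> HP vP Hv; have [θ θ_gt0 Hθ] := Delta_perturb_seq gs HP.
have θ1_gt0 : 0 < Order.min θ 1 by rewrite lt_min θ_gt0 ltr01.
have [e e_gt0 He] := small_multiple v HP θ1_gt0.
have He' θ' j : Order.min θ 1 <= θ' -> `|(e *: v) 0 j| <= θ' * P 0 j.
  by move=> le_θ; rewrite mxE; apply: le_trans (He j) _; rewrite ler_wpM2r // ltW.
exists (P + e *: v); split=> [j | | [t [_ eP]]].
- have := He' 1 j; rewrite ge_min lexx orbT mul1r => /(_ isT); rewrite ler_norml !mxE.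
  by case/andP => + _; lra.
- apply: Hθ => [g gg x y Dx Dy | j]; last by apply: He'; rewrite ge_min lexx.
  by rewrite !wdotZl (Hv g gg x y Dx Dy).
- move: vP; apply/negP; rewrite negbK.
  have ev : e *: v = (t - 1) *: P by rewrite scalerBl scale1r -eP addrAC subrr add0r.
  have -> : v = (e^-1 * (t - 1)) *: P.
    by rewrite -scalerA -ev scalerA mulVf ?gt_eqF // scale1r.
  exact: scalemx_sub.
Qed.

Variables (P : vec) (g0 : pser C n) (gs : seq (pser C n)).
Hypothesis HP : strictly_pos P.
Let S := face_sum P g0 gs.

Lemma wconst_self_face_sum : wconst P S.
Proof. by apply: face_sum_wconst => g _; apply: Delta_wconst. Qed.

Lemma dim_of_vertex : (~ (exists s, S s) -> off_ray (g0 :: gs) P) ->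
  is_vertex (same_faces (g0 :: gs)) P -> has_dim S n.-1.
Proof.
move=> empty_off /is_vertexE [P0 Hray].
have no_off : ~ off_ray (g0 :: gs) P by move=> [Q [wQ eQ nQ]]; apply/nQ/Hray.
split; last by rewrite prednK //; apply: not_aff_indep_full P0 wconst_self_face_sum.
apply: contrapT => noA.
have Sne : exists s, S s by apply: contrapT => /empty_off.
have [v [vP vS]] := wconst_off_line n_gt0 P0 wconst_self_face_sum Sne noA.
by apply/no_off/(off_ray_perturb HP vP); apply: wconst_face_sum Sne vS.
Qed.

Lemma vertex_of_dim : has_dim S n.-1 -> is_vertex (same_faces (g0 :: gs)) P.
Proof.
move=> [Haff _]; have P0 := strictly_pos_neq0 HP.
apply/is_vertexE; split=> // Q; split=> [[wQ eQ] | [t [t_gt0 ->]]]; last first.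
  split=> [j | g _]; last by rewrite Delta_scale.
  by rewrite mxE mulr_ge0 // ltW.
have QS : wconst Q S by apply: face_sum_wconst => g gg; rewrite (eQ g gg); apply: Delta_wconst.
have [t eQt] : exists t, Q = t *: P.
  have /submxP [D ->] := aff_indep_sub n_gt0 Haff P0 wconst_self_face_sum QS.
  by exists (D 0 0); rewrite {1}(mx11_scalar D) mul_scalar_mx.
rewrite eQt in wQ eQ *; exists t; split=> //.
have Sne : exists s, S s by case: Haff => p [Sp _]; exists (p ord0).
have [x0 Dx0] := (face_sum_nonempty P g0 gs).1 Sne g0 (or_introl erefl).
rewrite lt0r; apply/andP; split.
  apply: contra_notN (Delta0_neq HP Dx0) => /eqP t0.
  by rewrite (eQ g0 (or_introl erefl)) t0 scale0r.
by have := wQ (Ordinal n_gt0); rewrite mxE pmulr_lge0.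
Qed.

Lemma vertex_iff_dim : (~ (exists s, S s) -> off_ray (g0 :: gs) P) ->
  is_vertex (same_faces (g0 :: gs)) P <-> has_dim S n.-1.
Proof. by move=> empty_off; split; [apply: dim_of_vertex | apply: vertex_of_dim]. Qed.

End Vertex.

Section Jacobian.
Variables (R : realType) (C : numClosedFieldType) (n : nat).
Local Notation vec := 'rV[R]_n.
Implicit Types (P Q x : vec) (f g : pser C n).

Lemma pderiv_neq0 f i nu : (pderiv f i nu != 0) = (f (incr nu i) != 0).
Proof. by rewrite /pderiv mulf_eq0 pnatr_eq0. Qed.

Lemma incr_pred (nu : expo n) i : (0 < nu i)%N -> exists mu, incr mu i = nu.
Proof.
move=> nu_i; exists [ffun j => (nu j - (j == i))%N]; apply/ffunP => j.
by rewrite !ffunE; case: eqVneq => [->|_]; rewrite ?subnK ?subn0 ?addn0.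
Qed.

Lemma pt_incr (nu : expo n) i : pt R (incr nu i) = pt R nu + delta_mx 0 i.
Proof. by apply/rowP => j; rewrite !mxE ffunE natrD. Qed.

Lemma newton_pderiv f i x :
  newton (pderiv f i) x -> newton f (x + delta_mx 0 i).
Proof.
move=> nx; apply: (conv_hull_translate nx) => p [nu [fnu Hp]].
exists (incr nu i); split; first by rewrite -pderiv_neq0.
by move=> j; rewrite pt_incr [X in X <= _]mxE [X in _ <= X]mxE lerD2r.
Qed.

Lemma Delta_pderiv P f i : contains_var (face_fun P f) i ->
  Delta P (pderiv f i) = fun x => newton (pderiv f i) x /\ Delta P f (x + delta_mx 0 i).
Proof.
rewrite /face_fun => -[nu []]; case: asboolP => [Dnu fnu nu_i | _]; last by rewrite eqxx.
have [mu emu] := incr_pred nu_i.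
have nmu : newton (pderiv f i) (pt R mu) by apply: newton_pt; rewrite pderiv_neq0 emu.
have pt_mu : pt R mu + delta_mx 0 i = pt R nu by rewrite -pt_incr emu.
rewrite predeqE => x; split=> [[nx Hx] | [nx [_ Hx]]]; last first.
  by split=> // y /newton_pderiv/Hx; rewrite !wdotDr lerD2r.
split=> //; split=> [|y ny]; first exact: newton_pderiv.
rewrite wdotDr wdot_deltar; apply: le_trans (Dnu.2 y ny).
by rewrite -pt_mu wdotDr wdot_deltar lerD2r; apply: Hx.
Qed.

Lemma jequiv_of_wequiv f P Q : wequiv f P Q ->
  (forall i, contains_var (face_fun P f) i) -> jequiv f P Q.
Proof.
move=> ePQ Hvar; split=> // i.
have HvarQ : contains_var (face_fun Q f) i by rewrite /face_fun -ePQ; apply: Hvar.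
by rewrite (Delta_pderiv (Hvar i)) (Delta_pderiv HvarQ) ePQ.
Qed.

Lemma Delta_coord0 P g i x : strictly_pos P ->
  (forall nu, g nu != 0 -> nu i = 0%N) -> Delta P g x -> x 0 i = 0.
Proof.
move=> HP g_i [nx Hx]; apply/eqP; rewrite eq_le (newton_ge0 i nx) andbT leNgt.
apply/negP => x_i; rewrite -wdot_deltal in x_i.
suff : wdot P x < wdot P x by rewrite ltxx.
apply: (conv_hull_gt nx) x_i => p [nu [gnu Hp]].
split; first by apply/Hx/supp_orthant_newton; exists nu.
rewrite wdot_deltal => p_i.
have : P 0 i * (p - pt R nu) 0 i <= wdot P (p - pt R nu).
  apply: wdot_ge_term (strictly_pos_weight HP) _ => j.
  by move: (Hp j); rewrite !mxE subr_ge0.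
rewrite wdotBr !mxE (g_i _ gnu) subr0.
have := Hx _ (newton_pt R gnu); have := mulr_gt0 (HP i) p_i; lra.
Qed.

Definition jac_family f := map (pderiv f) (enum 'I_n).

Lemma jac_face_sumE P f : jac_face_sum P f = face_sum P f (jac_family f).
Proof. by rewrite /face_sum foldr_map. Qed.

Lemma wequiv_same_faces f P Q : wequiv f P Q <-> same_faces [:: f] P Q.
Proof. by split=> [ePQ g [<-|[]] | ePQ] //; apply: ePQ; left. Qed.

Lemma jequiv_same_faces f P Q : jequiv f P Q <-> same_faces (f :: jac_family f) P Q.
Proof.
split=> [[ePQ eiPQ] g [<- // | /List.in_map_iff [i [<- _]]] | ePQ]; first exact: eiPQ.
split=> [|i]; first by apply: ePQ; left.
by apply: ePQ; right; apply: List.in_map; apply: mem_In; rewrite mem_enum.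
Qed.

Lemma pderiv_eq0_supp f i :
  (forall nu, pderiv f i nu = 0) -> forall nu, f nu != 0 -> nu i = 0%N.
Proof.
move=> fi0 nu fnu; case: (posnP (nu i)) => // /incr_pred [mu emu].
by move: fnu; rewrite -emu -pderiv_neq0 fi0 eqxx.
Qed.

Lemma delta_mx_not_sub P i j : strictly_pos P -> j != i ->
  ~~ ((delta_mx 0 i : vec) <= P)%MS.
Proof.
move=> HP ji; apply/negP => /submxP [D]; rewrite (mx11_scalar D) mul_scalar_mx.
move=> /rowP eD; have := eD j; rewrite !mxE (negbTE ji) => /esym/eqP.
rewrite mulf_eq0 (gt_eqF (HP j)) orbF => /eqP D0.
by have := eD i; rewrite !mxE D0 mul0r !eqxx => /eqP; rewrite oner_eq0.
Qed.

Hypothesis n_gt0 : (0 < n)%N.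

Lemma jac_off_ray P f : strictly_pos P -> f (zero_expo n) = 0 ->
  ~ (exists s, face_sum P f (jac_family f) s) -> off_ray (f :: jac_family f) P.
Proof.
move=> HP f0 noS.
have [[nu0 fnu0] | f_eq0] := pselect (exists nu, f nu != 0); last first.
  have {}f_eq0 nu : f nu = 0 by apply: contra_notP f_eq0 => /eqP ?; exists nu.
  apply: (off_ray_zero n_gt0 HP) => g [<- // | /List.in_map_iff [i [<- _]]] nu.
  by rewrite /pderiv f_eq0 mulr0.
have [i fi0] : exists i, forall nu, pderiv f i nu = 0.
  apply: contrapT => nfi; apply/noS/face_sum_nonempty.
  move=> g [<- | /List.in_map_iff [i [<- _]]].
    exact: (Delta_nonempty HP fnu0).
  by apply: contrapT => /(Delta_empty_eq0 HP) fi0; apply: nfi; exists i.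
have supp_i g : List.In g (f :: jac_family f) -> forall nu, g nu != 0 -> nu i = 0%N.
  move=> [<- | /List.in_map_iff [k [<- _]]]; first exact: pderiv_eq0_supp.
  move=> nu; rewrite pderiv_neq0 => /(pderiv_eq0_supp fi0); rewrite ffunE.
  by move/eqP; rewrite addn_eq0 => /andP [/eqP].
(* As f (0) = 0, some monomial of f involves a variable z_j, and j <> i; this
   makes e_i independent of P. *)
have [j nu0j] : exists j, nu0 j != 0%N.
  apply/existsP; apply: contraNT fnu0 => /existsPn nu0_0; apply/eqP.
  suff -> : nu0 = zero_expo n by [].
  by apply/ffunP => j; rewrite ffunE; apply/eqP/negPn/nu0_0.
have ji : j != i by apply: contraNneq nu0j => ->; rewrite (supp_i f) //; left.
apply: (off_ray_perturb HP (delta_mx_not_sub HP ji)) => g gg x y Dx Dy.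
by rewrite !wdot_deltal !(Delta_coord0 HP (supp_i g gg)).
Qed.

End Jacobian.

Theorem proposition7 (R : realType) (C : numClosedFieldType) (n : nat)
    (f : pser C n) :
  (0 < n)%N -> convergent f -> f (zero_expo n) = 0 ->
  (* (1) *)
  (forall P Q : 'rV[R]_n, weight P -> weight Q ->
     jequiv f P Q -> wequiv f P Q) /\
  (forall P Q : 'rV[R]_n, weight P -> weight Q -> wequiv f P Q ->
     (forall i, contains_var (face_fun P f) i) -> jequiv f P Q) /\
  (* (2) *)
  (forall P : 'rV[R]_n, strictly_pos P ->
     (is_vertex (wequiv f) P <-> has_dim (Delta P f) n.-1) /\
     (is_vertex (jequiv f) P <-> has_dim (jac_face_sum P f) n.-1)).
Proof.
(* Only the supports of f and of its derivatives matter, not convergence. *)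
move=> n_gt0 _ f0; split; first by move=> P Q _ _ [].
split; first by move=> P Q _ _; apply: jequiv_of_wequiv.
move=> P HP; split.
  apply: iff_trans (is_vertex_iff (wequiv_same_faces f P)) _.
  apply: (vertex_iff_dim n_gt0 HP) => noS.
  apply: (off_ray_zero n_gt0 HP) => g [<- | []].
  by apply: (Delta_empty_eq0 HP) => -[x Dx]; apply: noS; exists x.
apply: iff_trans (is_vertex_iff (jequiv_same_faces f P)) _.
by rewrite jac_face_sumE; apply: (vertex_iff_dim n_gt0 HP); apply: jac_off_ray.
Qed.
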